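(* Let $N\ge 1$, let $C_1\ge C_2\ge\cdots\ge C_N>0$ be link capacities, let $X$ be a total traffic demand with $0\le X\le \sum_{i=1}^N C_i$, and let $E:[0,C_1]\to\mathbb{R}$ be a strictly concave function (the common per-link cost). Consider the problem of minimizing $E_B(x_1,\dots,x_N)=\sum_{i=1}^N E(x_i)$ subject to $0\le x_i\le C_i$ for all $i$ and $\sum_{i=1}^N x_i = X$. Then $E_B$ attains its minimum over this feasible set at the allocation defined recursively by $x_i=\min\{C_i,\ X-\sum_{j<i}x_j\}$ for $i=1,\dots,N$.
   Context: The allocation $x_i=\min\{C_i, X-\sum_{j<i}x_j\}$ is the sequential ''water-filling'' allocation: each link is filled to capacity before any traffic is sent on the next one. *)

From mathcomp Require Import all_boot all_order all_algebra.
Set Implicit Arguments. Unset Strict Implicit. Unset Printing Implicit Defensive.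
Import Order.TTheory GRing.Theory Num.Theory.
Local Open Scope ring_scope.

Definition strictly_concave_on (R : realFieldType) (a b : R) (E : R -> R) : Prop :=
  forall x y t : R, a <= x <= b -> a <= y <= b -> x != y -> 0 < t < 1 ->
    t * E x + (1 - t) * E y < E (t * x + (1 - t) * y).

(* wf_prefix C X n = x_0 + ... + x_(n-1) for the water-filling allocation
   (links indexed 0..N-1) *)
Fixpoint wf_prefix (R : realFieldType) (C : nat -> R) (X : R) (n : nat) : R :=
  match n with
  | 0 => 0
  | n'.+1 => wf_prefix C X n' + Num.min (C n') (X - wf_prefix C X n')
  end.

Definition waterfill (R : realFieldType) (C : nat -> R) (X : R) (i : nat) : R :=
  Num.min (C i) (X - wf_prefix C X i).

Definition feasible (R : realFieldType) (N : nat) (C : nat -> R) (X : R)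
    (x : nat -> R) : Prop :=
  (forall i, (i < N)%N -> 0 <= x i <= C i) /\ \sum_(i < N) x i = X.

From mathcomp Require Import all_boot all_order all_algebra all_fingroup.
From mathcomp Require Import ring lra.
Import Order.TTheory GRing.Theory Num.Theory.
Local Open Scope ring_scope.

(* Induction on the number of links.  Rearranging a feasible allocation x we
   may assume x_0 is its largest entry.  Raise x_0 to the water-filling value
   w_0 = min (C_0, X) by taking the same fraction mu of every other entry:
   each x_j (j > 0) is at most x_0, so by concavity the chord slope over
   [x_0, w_0] is at most the slope over [x_j - mu x_j, x_j], and the cost
   does not increase.  The remaining entries are feasible for the problem on
   links 1..N-1 with demand X - w_0, whose water-filling allocation is the
   tail of the original one. *)

Definition concave_on {R : realFieldType} (a b : R) (E : R -> R) : Prop :=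
  forall x y t : R, a <= x <= b -> a <= y <= b -> 0 < t < 1 ->
    t * E x + (1 - t) * E y <= E (t * x + (1 - t) * y).

Lemma strictly_concave_on_concave (R : realFieldType) (a b : R) (E : R -> R) :
  strictly_concave_on a b E -> concave_on a b E.
Proof.
move=> sconcE x y t hx hy ht; case: (eqVneq x y) => [-> | nxy].
  by rewrite -!mulrDl subrKC !mul1r.
exact/ltW/sconcE.
Qed.

Section ConcaveSlopes.
Variables (R : realFieldType) (M : R) (E : R -> R).
Hypothesis concE : concave_on 0 M E.

Definition slope (x y : R) : R := (E y - E x) / (y - x).

Lemma concave_three_point p q r : 0 <= p -> p < q -> q < r -> r <= M ->
  (r - q) * E p + (q - p) * E r <= (r - p) * E q.
Proof.
move=> p0 pq qr rM.
have rp : 0 < r - p by lra.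
set t := (r - q) / (r - p).
have t01 : 0 < t < 1.
  by apply/andP; split; rewrite /t ?ltr_pdivrMr //; [apply: divr_gt0|]; lra.
have tq : t * p + (1 - t) * r = q by rewrite /t; field; lra.
have le_Eq : t * E p + (1 - t) * E r <= E q.
  by rewrite -tq; apply: concE => //; apply/andP; split; lra.
have -> : (r - q) * E p + (q - p) * E r = (r - p) * (t * E p + (1 - t) * E r).
  by rewrite /t; field; lra.
by rewrite ler_pM2l.
Qed.

Lemma slope_decr_r p q r : 0 <= p -> p < q -> q < r -> r <= M ->
  slope p r <= slope p q.
Proof.
move=> p0 pq qr rM; rewrite -subr_ge0.
have -> : slope p q - slope p r =
    ((r - p) * E q - ((r - q) * E p + (q - p) * E r)) / ((q - p) * (r - p)).
  by rewrite /slope; field; apply/andP; split; rewrite subr_eq0 gt_eqF //; lra.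
by apply: divr_ge0; [rewrite subr_ge0 concave_three_point | apply: mulr_ge0]; lra.
Qed.

Lemma slope_decr_l p q r : 0 <= p -> p < q -> q < r -> r <= M ->
  slope q r <= slope p r.
Proof.
move=> p0 pq qr rM; rewrite -subr_ge0.
have -> : slope p r - slope q r =
    ((r - p) * E q - ((r - q) * E p + (q - p) * E r)) / ((r - q) * (r - p)).
  by rewrite /slope; field; apply/andP; split; rewrite subr_eq0 gt_eqF //; lra.
by apply: divr_ge0; [rewrite subr_ge0 concave_three_point | apply: mulr_ge0]; lra.
Qed.

Lemma slope_antitone u b a c : 0 <= u -> u < b -> b <= a -> a < c -> c <= M ->
  slope a c <= slope u b.
Proof.
move=> u0 ub ba ac cM.
have slope_bc : slope a c <= slope b c.
  case: (eqVneq b a) => [-> //|nba].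
  by apply: slope_decr_l => //; rewrite ?lt_neqAle ?nba //; lra.
apply: (le_trans slope_bc); apply: (@le_trans _ _ (slope u c)).
  by apply: slope_decr_l => //; lra.
by apply: slope_decr_r => //; lra.
Qed.

Lemma slope_mul_le_incr u b a c : 0 <= u -> u < b -> b <= a -> a < c -> c <= M ->
  (b - u) * slope a c <= E b - E u.
Proof.
move=> u0 ub ba ac cM.
have -> : E b - E u = (b - u) * slope u b by rewrite /slope mulrC divfK // gt_eqF ?subr_gt0.
by rewrite ler_pM2l ?subr_gt0 // slope_antitone.
Qed.

Lemma concave_transfer N (a D mu : R) (b : nat -> R) : 0 <= mu <= 1 ->
  (forall j, (j < N)%N -> 0 <= b j <= a) -> D = mu * \sum_(j < N) b j ->
  a + D <= M ->
  E (a + D) + \sum_(j < N) E (b j - mu * b j) <= E a + \sum_(j < N) E (b j).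
Proof.
move=> /andP[mu0 mu1] hb hD aDM.
have mub0 (j : 'I_N) : 0 <= mu * b j.
  by have /andP[b0 _] := hb j (ltn_ord j); apply: mulr_ge0.
case: (eqVneq D 0) => [D0 | nD0].
  have mub_eq0 (j : 'I_N) : mu * b j = 0.
    apply: (@psumr_eq0P _ _ predT (fun j : 'I_N => mu * b j)) => //.
    by rewrite -mulr_sumr -hD.
  by rewrite D0 addr0 lerD2l; apply: ler_sum => j _; rewrite mub_eq0 subr0.
have Dpos : 0 < D.
  rewrite lt_neqAle eq_sym nD0 hD mulr_ge0 // sumr_ge0 // => j _.
  by have /andP[] := hb j (ltn_ord j).
set s := slope a (a + D).
have gain : E (a + D) - E a = D * s.
  by rewrite /s /slope (addrC a D) addrK mulrC divfK // gt_eqF.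
have loss (j : 'I_N) : mu * b j * s <= E (b j) - E (b j - mu * b j).
  have /andP[b0 ba] := hb j (ltn_ord j).
  case: (eqVneq (mu * b j) 0) => [-> | nz]; first by rewrite mul0r subr0 subrr.
  have mub_le : mu * b j <= b j by rewrite -[leRHS]mul1r ler_wpM2r.
  have mub_pos : 0 < mu * b j by rewrite lt_def nz mub0.
  have := @slope_mul_le_incr (b j - mu * b j) (b j) a (a + D).
  have -> : b j - (b j - mu * b j) = mu * b j by ring.
  by apply; lra.
have : \sum_(j < N) mu * b j * s <= \sum_(j < N) (E (b j) - E (b j - mu * b j)).
  by apply: ler_sum => j _; exact: loss.
rewrite -mulr_suml -mulr_sumr -hD sumrB -gain; lra.
Qed.

End ConcaveSlopes.

Section WaterFilling.
Variable R : realFieldType.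

Lemma wf_prefix_shift (C : nat -> R) X n :
  wf_prefix C X n.+1 =
  Num.min (C 0%N) X + wf_prefix (fun i => C i.+1) (X - Num.min (C 0%N) X) n.
Proof.
elim: n => [|n IH]; first by rewrite /= subr0 add0r addr0.
have -> : wf_prefix C X n.+2 =
    wf_prefix C X n.+1 + Num.min (C n.+1) (X - wf_prefix C X n.+1) by [].
by rewrite IH /= opprD !addrA.
Qed.

Lemma waterfill0 (C : nat -> R) X : waterfill C X 0 = Num.min (C 0%N) X.
Proof. by rewrite /waterfill /= subr0. Qed.

Lemma waterfillS (C : nat -> R) X n :
  waterfill C X n.+1 = waterfill (fun i => C i.+1) (X - Num.min (C 0%N) X) n.
Proof. by rewrite /waterfill wf_prefix_shift opprD addrA. Qed.

Lemma sum_waterfill (C : nat -> R) X n :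
  \sum_(i < n) waterfill C X i = wf_prefix C X n.
Proof. by elim: n => [|n IH]; rewrite ?big_ord0 // big_ord_recr IH. Qed.

Lemma wf_prefix_min (C : nat -> R) X n :
  (forall i, (i < n)%N -> 0 <= C i) -> 0 <= X ->
  wf_prefix C X n = Num.min (\sum_(i < n) C i) X.
Proof.
move=> hC hX; elim: n hC => [|n IH] hC; first by rewrite big_ord0 /= min_l.
rewrite /= IH => [|i hi]; last exact/hC/ltnW.
have := hC n (ltnSn n); rewrite big_ord_recr /=.
set S := \sum_(i < n) C i => Cn.
case: (leP S X) => hS; last by rewrite subrr (min_r Cn) addr0 min_r; lra.
case: (leP (C n) (X - S)) => h.
  by rewrite min_l //; lra.
by rewrite min_r; lra.
Qed.

Lemma waterfill_feasible N (C : nat -> R) X :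
  (forall i, (i < N)%N -> 0 <= C i) -> 0 <= X -> X <= \sum_(i < N) C i ->
  feasible N C X (waterfill C X).
Proof.
move=> hC hX0 hXle; split; last by rewrite sum_waterfill wf_prefix_min // min_r.
move=> i hi; rewrite /waterfill ge_min lexx le_min hC // subr_ge0 /=.
by rewrite wf_prefix_min ?ge_min ?lexx ?orbT // => j hj; apply/hC/(ltn_trans hj).
Qed.

End WaterFilling.

Definition swap0 (k i : nat) : nat :=
  if i == 0%N then k else if i == k then 0%N else i.

Lemma sum_swap0 (V : nmodType) (g : nat -> V) N k : (k < N)%N ->
  \sum_(i < N) g (swap0 k i) = \sum_(i < N) g i.
Proof.
case: N => [//|n] hk; pose k' : 'I_n.+1 := Ordinal hk.
rewrite [RHS](reindex_inj (@perm_inj _ (tperm ord0 k'))).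
apply: eq_bigr => j _; congr g; rewrite /swap0.
case: ifP => [/eqP j0 | j0]; first by rewrite (_ : j = ord0) ?tpermL //; exact: val_inj.
case: ifP => [/eqP jk | jk]; first by rewrite (_ : j = k') ?tpermR //; exact: val_inj.
by rewrite tpermD // -val_eqE eq_sym ?j0 ?jk.
Qed.

Lemma maxfirst_rearrangement (R : realFieldType) (E : R -> R) N (C : nat -> R) X x :
  (forall i j, (i <= j)%N -> (j < N.+1)%N -> C j <= C i) ->
  feasible N.+1 C X x ->
  exists x', [/\ feasible N.+1 C X x', forall j, (j < N.+1)%N -> x' j <= x' 0%N
              & \sum_(i < N.+1) E (x' i) = \sum_(i < N.+1) E (x i)].
Proof.
move=> hCdec [hx hs].
case: (@arg_maxP _ _ 'I_N.+1 ord0 xpredT (fun i => x i) isT) => k _ kmax.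
have xmax j : (j < N.+1)%N -> x j <= x k by move=> hj; exact: (kmax (Ordinal hj)).
exists (fun i => x (swap0 k i)); split.
- split; last by rewrite (@sum_swap0 _ x _ _ (ltn_ord k)).
  move=> i hi; rewrite /swap0.
  case: eqVneq => [-> | i0].
    by have /andP[-> xkC] := hx k (ltn_ord k); rewrite (le_trans xkC) ?hCdec.
  case: eqVneq => [ik | _]; last exact: hx.
  have /andP[x00 _] := hx 0%N (ltn0Sn N); have /andP[_ xkC] := hx i hi.
  by rewrite x00 (le_trans (xmax 0%N (ltn0Sn N))) // -ik.
- by move=> j hj; rewrite /swap0 /=; case: ifP => _; [|case: ifP => _]; exact: xmax.
- exact: (@sum_swap0 _ (fun i => E (x i)) _ _ (ltn_ord k)).
Qed.

Section Optimality.
Variables (R : realFieldType) (M : R) (E : R -> R).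
Hypothesis concE : concave_on 0 M E.

Lemma front_load N (C : nat -> R) X x : C 0%N <= M ->
  feasible N.+1 C X x -> (forall j, (j < N.+1)%N -> x j <= x 0%N) ->
  exists y, feasible N (fun i => C i.+1) (X - Num.min (C 0%N) X) y /\
    E (Num.min (C 0%N) X) + \sum_(j < N) E (y j) <= \sum_(i < N.+1) E (x i).
Proof.
move=> CM [hx hs] xmax.
set a := x 0%N; set w0 := Num.min (C 0%N) X; set T := \sum_(j < N) x j.+1.
have aT : a + T = X by rewrite -hs big_ord_recl.
have T0 : 0 <= T by apply: sumr_ge0 => j _; have /andP[] := hx j.+1 (ltn_ord j).
have /andP[a0 aC] := hx 0%N (ltn0Sn N).
have w0C : w0 <= C 0%N by rewrite ge_min lexx.
have w0X : w0 <= X by rewrite ge_min lexx orbT.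
have aw0 : a <= w0 by rewrite le_min aC /=; lra.
set D := w0 - a.
(* when T = 0 we have a = w0 = X, hence D = 0 and the value of mu is irrelevant *)
set mu := if T == 0 then 0 else D / T.
have hD : D = mu * T.
  rewrite /mu; case: (eqVneq T 0) => [T0' | nT]; last by rewrite divfK.
  by rewrite mul0r /D; lra.
have mu01 : 0 <= mu <= 1.
  rewrite /mu; case: (eqVneq T 0) => [_ | nT]; first by rewrite lexx ler01.
  have Tpos : 0 < T by rewrite lt_neqAle eq_sym nT.
  by rewrite divr_ge0 ?ler_pdivrMr ?mul1r /D //=; lra.
have /andP[mu0 mu1] := mu01.
have hb j : (j < N)%N -> 0 <= x j.+1 <= a.
  by move=> hj; have /andP[-> _] := hx j.+1 hj; rewrite xmax.
exists (fun j => x j.+1 - mu * x j.+1); split.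
- split; last by rewrite sumrB -mulr_sumr -/T -hD /D; lra.
  move=> i hi; have /andP[x0 xC] := hx i.+1 hi.
  have mux0 : 0 <= mu * x i.+1 by rewrite mulr_ge0.
  have mux_le : mu * x i.+1 <= x i.+1 by rewrite -[leRHS]mul1r ler_wpM2r.
  lra.
- have := @concave_transfer R M E concE N a D mu _ mu01 hb hD.
  rewrite /D addrC subrK big_ord_recl; apply; exact: le_trans CM.
Qed.

Lemma waterfill_optimal N (C : nat -> R) X x :
  (forall i j, (i <= j)%N -> (j < N)%N -> C j <= C i) ->
  (forall i, (i < N)%N -> C i <= M) -> feasible N C X x ->
  \sum_(i < N) E (waterfill C X i) <= \sum_(i < N) E (x i).
Proof.
elim: N C X x => [|N IH] C X x hCdec hCM hx; first by rewrite !big_ord0.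
have [x' [hx' x'max <-]] := @maxfirst_rearrangement R E N C X x hCdec hx.
have [y [hy hyE]] := @front_load N _ _ _ (hCM 0%N (ltn0Sn N)) hx' x'max.
rewrite big_ord_recl waterfill0; apply: le_trans hyE; rewrite lerD2l.
under eq_bigr do rewrite lift0 waterfillS.
by apply: IH hy => [i j ij jN | i iN]; [apply: hCdec | apply: hCM].
Qed.

End Optimality.

Theorem proposition1 (R : realFieldType) (N : nat) (C : nat -> R) (X : R)
    (E : R -> R)
    (hN : (1 <= N)%N)
    (hCdec : forall i j : nat, (i <= j)%N -> (j < N)%N -> C j <= C i)
    (hCpos : forall i : nat, (i < N)%N -> 0 < C i)
    (hX0 : 0 <= X) (hXle : X <= \sum_(i < N) C i)
    (hE : strictly_concave_on 0 (C 0%N) E) :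
  feasible N C X (waterfill C X) /\
  (forall x : nat -> R, feasible N C X x ->
     \sum_(i < N) E (waterfill C X i) <= \sum_(i < N) E (x i)).
Proof.
split; first by apply: waterfill_feasible => // i hi; exact/ltW/hCpos.
have concE := @strictly_concave_on_concave R 0 (C 0%N) E hE.
move=> x hx; apply: (@waterfill_optimal R (C 0%N) E concE N C X x hCdec _ hx).
by move=> i hi; apply: hCdec.
Qed.
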